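(* Let $k$ be a field, $(C,\Delta)$ a coassociative coalgebra over $k$, and $(L,\phi)$ a Lie algebra over $k$ with bracket $\phi(x,y)=[x,y]$. Let $\Phi:Hom(C,L)\otimes Hom(C,L)\to Hom(C,L)$ be the induced map, $\Phi(f\otimes g)(c)=\sum[f(c_{(1)}),g(c_{(2)})]$. Then: (i) $\Phi\circ\tau=-\Phi^{\tau}$, where $\tau$ is the transposition; i.e. $\Phi(g\otimes f)(c)=-\sum[f(c_{(2)}),g(c_{(1)})]$ for all $f,g\in Hom(C,L)$, $c\in C$; (ii) $\Phi\circ(1\otimes\Phi)+(\Phi\circ(1\otimes\Phi))^{\xi}\circ\xi+(\Phi\circ(1\otimes\Phi))^{\xi^2}\circ\xi^2=0$, where $\xi=(1\,2\,3)\in S_3$; explicitly, for all $g_1,g_2,g_3\in Hom(C,L)$ and $c\in C$, with $\Delta^{(2)}(c)=\sum c_{(1)}\otimes c_{(2)}\otimes c_{(3)}$, $$\sum\Big([g_1(c_{(1)}),[g_2(c_{(2)}),g_3(c_{(3)})]]+[g_2(c_{(2)}),[g_3(c_{(3)}),g_1(c_{(1)})]]+[g_3(c_{(3)}),[g_1(c_{(1)}),g_2(c_{(2)})]]\Big)=0.$$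
   Context: $\Delta^{(1)}=\Delta$, $\Delta^{(2)}=(\Delta\otimes1)\circ\Delta$; Sweedler notation $\Delta(c)=\sum c_{(1)}\otimes c_{(2)}$. $S_n$ acts on $n$-fold tensor products (of elements of $C$, $L$, or $Hom(C,L)$) by $\sigma(x_1\otimes\dots\otimes x_n)=x_{\sigma(1)}\otimes\dots\otimes x_{\sigma(n)}$. For a map $\Theta$ induced by $\theta:L^{\otimes n}\to L$ (i.e. $\Theta(f_1\otimes\dots\otimes f_n)=\theta\circ(f_1\otimes\dots\otimes f_n)\circ\Delta^{(n-1)}$) and $\sigma\in S_n$, $\Theta^\sigma(f_1\otimes\dots\otimes f_n)=\theta\circ(f_1\otimes\dots\otimes f_n)\circ\sigma\circ\Delta^{(n-1)}$. In (ii), $\Phi\circ(1\otimes\Phi)$ is the map induced by $\theta=\phi\circ(1\otimes\phi)$ and $(\Phi\circ(1\otimes\Phi))^\sigma$ is the corresponding $\Theta^\sigma$. *)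

From HB Require Import structures.
From mathcomp Require Import all_boot all_order all_algebra.
Set Implicit Arguments. Unset Strict Implicit. Unset Printing Implicit Defensive.
Import GRing.Theory.
Local Open Scope ring_scope.

Section Defs.
Variable k : fieldType.

Definition bilinear_map (U V W : lmodType k) (b : U -> V -> W) : Prop :=
  (forall (a : k) x x' y, b (a *: x + x') y = a *: b x y + b x' y) /\
  (forall (a : k) x y y', b x (a *: y + y') = a *: b x y + b x y').

Definition trilinear_map (U V X W : lmodType k) (t : U -> V -> X -> W) : Prop :=
  (forall (a : k) x x' y z, t (a *: x + x') y z = a *: t x y z + t x' y z) /\
  (forall (a : k) x y y' z, t x (a *: y + y') z = a *: t x y z + t x y' z) /\
  (forall (a : k) x y z z', t x y (a *: z + z') = a *: t x y z + t x y z').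

(* An element of C (x) C is represented by a finite list of pure tensors;
   two representatives are equal iff they agree on every bilinear map. *)
Definition tensor2_eq (C : lmodType k) (s t : seq (C * C)) : Prop :=
  forall (W : lmodType k) (b : C -> C -> W), bilinear_map b ->
    \sum_(p <- s) b p.1 p.2 = \sum_(p <- t) b p.1 p.2.

Definition tensor3_eq (C : lmodType k) (s t : seq (C * C * C)) : Prop :=
  forall (W : lmodType k) (b : C -> C -> C -> W), trilinear_map b ->
    \sum_(p <- s) b p.1.1 p.1.2 p.2 = \sum_(p <- t) b p.1.1 p.1.2 p.2.

Definition delta2 (C : lmodType k) (delta : C -> seq (C * C)) (c : C)
  : seq (C * C * C) :=
  flatten [seq [seq (q.1, q.2, p.2) | q <- delta p.1] | p <- delta c].

Definition delta2' (C : lmodType k) (delta : C -> seq (C * C)) (c : C)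
  : seq (C * C * C) :=
  flatten [seq [seq (p.1, q.1, q.2) | q <- delta p.2] | p <- delta c].

Definition coassoc_coalgebra (C : lmodType k) (delta : C -> seq (C * C)) : Prop :=
  (forall (a : k) x y,
     tensor2_eq (delta (a *: x + y))
       ([seq (a *: p.1, p.2) | p <- delta x] ++ delta y)) /\
  (forall c, tensor3_eq (delta2 delta c) (delta2' delta c)).

Definition lie_algebra (L : lmodType k) (phi : L -> L -> L) : Prop :=
  bilinear_map phi /\
  (forall x, phi x x = 0) /\
  (forall x y z, phi x (phi y z) + phi y (phi z x) + phi z (phi x y) = 0).

Definition Phi (C L : lmodType k) (delta : C -> seq (C * C)) (phi : L -> L -> L)
  (f g : C -> L) (c : C) : L :=
  \sum_(p <- delta c) phi (f p.1) (g p.2).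

End Defs.

From HB Require Import structures.
From mathcomp Require Import all_boot all_order all_algebra.
Import GRing.Theory.
Local Open Scope ring_scope.

Section LieBracket.
Variables (k : fieldType) (L : lmodType k) (phi : L -> L -> L).
Hypothesis phi_bilinear : bilinear_map phi.

Lemma bracketDl x x' y : phi (x + x') y = phi x y + phi x' y.
Proof. by have := phi_bilinear.1 1 x x' y; rewrite !scale1r. Qed.

Lemma bracketDr x y y' : phi x (y + y') = phi x y + phi x y'.
Proof. by have := phi_bilinear.2 1 x y y'; rewrite !scale1r. Qed.

Hypothesis phi_alternating : forall x, phi x x = 0.

Lemma bracket_anticomm x y : phi x y = - phi y x.
Proof.
apply/eqP; rewrite -addr_eq0; apply/eqP.
by have := phi_alternating (x + y); rewrite bracketDl !bracketDr !phi_alternating add0r addr0.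
Qed.

Lemma Phi_swap (C : lmodType k) (delta : C -> seq (C * C)) (f g : C -> L) c :
  Phi delta phi g f c = - \sum_(p <- delta c) phi (f p.2) (g p.1).
Proof. by rewrite /Phi -sumrN; apply: eq_bigr => p _; apply: bracket_anticomm. Qed.

End LieBracket.

Theorem proposition3 (k : fieldType) (C : lmodType k) (delta : C -> seq (C * C))
  (L : lmodType k) (phi : L -> L -> L) :
  coassoc_coalgebra delta -> lie_algebra phi ->
  (forall (f g : {linear C -> L}) (c : C),
     Phi delta phi g f c = - \sum_(p <- delta c) phi (f p.2) (g p.1)) /\
  (forall (g1 g2 g3 : {linear C -> L}) (c : C),
     \sum_(t <- delta2 delta c)
        (phi (g1 t.1.1) (phi (g2 t.1.2) (g3 t.2))
       + phi (g2 t.1.2) (phi (g3 t.2) (g1 t.1.1))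
       + phi (g3 t.2) (phi (g1 t.1.1) (g2 t.1.2))) = 0).
Proof.
move=> _ [phi_bilinear [phi_alternating jacobi]]; split=> *.
  exact: Phi_swap.
by rewrite big1 // => t _; apply: jacobi.
Qed.
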